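(* There exist an increasing function $g:\mathbb{N}\setminus\{0\}\to\mathbb{N}\setminus\{0\}$ and, for each $i\in\mathbb{N}\setminus\{0\}$, a regular $g(i)$-sided polygon $P^i\subseteq\mathbb{R}^2$ such that $S=\bigcup_{i=1}^\infty\big(P^i+i\,\mathbf e(1)\big)$ is a rational MICP representable set and the sets $P^i+i\,\mathbf e(1)$, $i\ge1$, are pairwise disjoint.
   Context: $\mathbf e(1)=(1,0)\in\mathbb{R}^2$. A set $S\subseteq\mathbb{R}^n$ is MICP representable if there is a closed convex $M\subseteq\mathbb{R}^{n+p+d}$ (variables $(\mathbf x,\mathbf y,\mathbf z)$) such that $\mathbf x\in S$ iff there exist $\mathbf y\in\mathbb{R}^p$, $\mathbf z\in\mathbb{Z}^d$ with $(\mathbf x,\mathbf y,\mathbf z)\in M$. It is rational MICP representable if such an $M$ exists with $\operatorname{proj}_{\mathbf z}(M)$ rationally unbounded, where $I\subseteq\mathbb{R}^d$ is rationally unbounded if for every image $I'\subseteq\mathbb{R}^{d'}$ of $I$ under a rational affine map, either $I'$ is bounded or its recession cone $I'_\infty=\{\mathbf r:\ \mathbf x+\lambda\mathbf r\in I'\ \forall\mathbf x\in I',\lambda\ge0\}$ contains a nonzero integer vector. *)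

From HB Require Import structures.
From mathcomp Require Import all_boot all_order all_algebra.
From mathcomp Require Import all_classical all_reals all_analysis.
Set Implicit Arguments. Unset Strict Implicit. Unset Printing Implicit Defensive.
Import Order.TTheory GRing.Theory Num.Theory.
Import numFieldNormedType.Exports.
Local Open Scope classical_set_scope.
Local Open Scope ring_scope.

Section Defs.
Variable R : realType.

Definition convex_set (k : nat) (M : set 'rV[R]_k) : Prop :=
  forall x y t, M x -> M y -> 0 <= t -> t <= 1 -> M (t *: x + (1 - t) *: y).

Definition int_vec (k : nat) (z : 'rV[R]_k) : Prop :=
  forall i, z 0 i \is a Num.int.

Definition rational (x : R) : Prop := exists q : rat, x = ratr q.

Definition MICP_rep_by (n p d : nat) (S : set 'rV[R]_n)
    (M : set 'rV[R]_(n + p + d)) : Prop :=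
  closed M /\ convex_set M /\
  forall x, S x <-> exists (y : 'rV[R]_p) (z : 'rV[R]_d),
                int_vec z /\ M (row_mx (row_mx x y) z).

Definition MICP_representable (n : nat) (S : set 'rV[R]_n) : Prop :=
  exists p d (M : set 'rV[R]_(n + p + d)), MICP_rep_by S M.

Definition proj_z (n p d : nat) (M : set 'rV[R]_(n + p + d)) : set 'rV[R]_d :=
  [set z | exists (x : 'rV[R]_n) (y : 'rV[R]_p), M (row_mx (row_mx x y) z)].

Definition bounded_set (k : nat) (I : set 'rV[R]_k) : Prop :=
  exists r : R, forall v, I v -> forall i, `|v 0 i| <= r.

Definition recession_cone (k : nat) (I : set 'rV[R]_k) : set 'rV[R]_k :=
  [set r | forall x (lam : R), I x -> 0 <= lam -> I (x + lam *: r)].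

Definition rationally_unbounded (d : nat) (I : set 'rV[R]_d) : Prop :=
  forall (d' : nat) (A : 'M[R]_(d, d')) (b : 'rV[R]_d'),
    (forall i j, rational (A i j)) -> (forall j, rational (b 0 j)) ->
    let I' := (fun v => v *m A + b) @` I in
    bounded_set I' \/
    exists r, recession_cone I' r /\ r != 0 /\ int_vec r.

Definition rational_MICP_representable (n : nat) (S : set 'rV[R]_n) : Prop :=
  exists p d (M : set 'rV[R]_(n + p + d)),
    MICP_rep_by S M /\ rationally_unbounded (proj_z M).

(* the closed convex region bounded by a regular k-gon (k >= 3) with
   center c, circumradius r > 0 and rotation angle th *)
Definition pt2 (a b : R) : 'rV[R]_2 := \row_(j < 2) (if j == 0 then a else b).

Definition regular_polygon (k : nat) (P : set 'rV[R]_2) : Prop :=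
  (3 <= k)%N /\
  exists (c : 'rV[R]_2) (r th : R), 0 < r /\
    let v := fun j : 'I_k =>
      c + r *: pt2 (cos (th + 2 * pi * j%:R / k%:R))
                   (sin (th + 2 * pi * j%:R / k%:R)) in
    P = [set x | exists w : 'I_k -> R, (forall j, 0 <= w j) /\
                  \sum_j w j = 1 /\ x = \sum_j w j *: v j].

Definition e1 : 'rV[R]_2 := pt2 1 0.

Definition translate_e1 (i : nat) (P : set 'rV[R]_2) : set 'rV[R]_2 :=
  (fun x => x + i%:R *: e1) @` P.

End Defs.

From Pilot Require Import Defs.
From HB Require Import structures.
From mathcomp Require Import all_boot all_order all_algebra.
From mathcomp Require Import all_classical all_reals all_analysis.
From mathcomp Require Import ring lra zify.
Import Order.TTheory GRing.Theory Num.Theory.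
Import numFieldNormedType.Exports.
Local Open Scope classical_set_scope.
Local Open Scope ring_scope.
Set Implicit Arguments. Unset Strict Implicit. Unset Printing Implicit Defensive.

(* The point set of the corollary is the union of translates P_i + i e1
   (i >= 1) of centred regular polygons P_i with sides i = 2^(i+3) vertices
   and circumradius radius i = (1 - 2^-i) / 4 < 1/4; distinct translates are
   therefore disjoint.  It is represented with one integer variable z and
   the lifted set
     M = { (x, z) | z >= 1 and, for all m and every edge j of P_m,
                    facet m j (x - z e1) <= lift m z },
   an intersection of closed half-spaces, hence closed and convex.  Here
   facet m j is the linear functional whose sublevel set at the value
   level m is the half-plane of the j-th edge of P_m, and lift m is an affine function of z
   equal to level m at z = m.  The heart of the construction is the
   inequality 2 * radius i <= lift m i for i <> m (two_radius_le_lift): at an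
   integer height z = i, the inequalities for m <> i are then implied by
   those of P_i, so the slice of M at height i is exactly P_i.  The
   projection of M on z is the half-line [1, +oo), whose rational images
   are bounded or have an integral recession direction. *)

Section Construction.
Variable R : realType.
Implicit Types (m n d : nat).

(* Parameters of the i-th polygon: sides i = 2^(i+3) vertices, ipow2 i = 2^-i,
   circumradius radius i and central angle step i; level i is the value of an
   edge functional on its own edge, and lift m t the affine bound imposed on
   the edges of P_m at height t, with slope slope m. *)
Definition sides m : nat := 2 ^ m.+3.
Definition ipow2 m : R := (2 ^ m)%:R^-1.
Definition radius m : R := (1 - ipow2 m) / 4.
Definition step m : R := 2 * pi / (sides m)%:R.
Definition defect m : R := 1 - cos (step m).
Definition level m : R := (1 + cos (step m)) * radius m.
Definition slope m : R := (ipow2 m + defect m) / 4.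
Definition lift m (t : R) : R := level m + slope m * (t - m%:R).

Lemma sides_gt0 m : (0 < sides m)%N.
Proof. by rewrite expn_gt0. Qed.

Lemma sides_ge3 m : (3 <= sides m)%N.
Proof. by rewrite /sides !expnS; have := expn_gt0 2 m; lia. Qed.

Lemma sides_neq0 m : (sides m)%:R != 0 :> R.
Proof. by rewrite pnatr_eq0 -lt0n sides_gt0. Qed.

Lemma ipow2_gt0 m : 0 < ipow2 m.
Proof. by rewrite invr_gt0 ltr0n expn_gt0. Qed.

Lemma ipow2_le1 m : ipow2 m <= 1.
Proof. by rewrite invf_le1 ?ler1n ?ltr0n ?expn_gt0. Qed.

Lemma ipow2D m n : ipow2 (m + n) = ipow2 m * ipow2 n.
Proof. by rewrite /ipow2 expnD natrM invfM. Qed.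

Lemma ipow2S m : ipow2 m.+1 = ipow2 m / 2.
Proof. by rewrite -addn1 ipow2D [ipow2 1]/ipow2 expn1. Qed.

(* Halving the angle at least halves 1 - cos, since 1 - cos (2y) = (1 - cos y)(1 + cos y) * 2. *)
Lemma one_sub_cos_pi_div_pow2 n : 1 - cos (pi / (2 ^ n)%:R) <= 2 * ipow2 n.
Proof.
elim: n => [|n IH]; first by rewrite /ipow2 expn0 divr1 cospi invr1; lra.
have pow_neq0 : (2 ^ n)%:R != 0 :> R by rewrite pnatr_eq0 expn_eq0.
have double : pi / (2 ^ n)%:R = (pi / (2 ^ n.+1)%:R) *+ 2 :> R.
  by rewrite expnS natrM -mulr_natr; field.
have c_le1 := @cos_le1 R (pi / (2 ^ n.+1)%:R).
have c_ge0 : 0 <= cos (pi / (2 ^ n.+1)%:R) :> R.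
  apply: cos_ge0_pihalf; apply/andP; split.
    by rewrite (@le_trans _ _ 0) // ?oppr_le0 ?divr_ge0 ?pi_ge0.
  rewrite ler_pM2l ?pi_gt0 // lef_pV2 ?posrE ?ltr0n ?expn_gt0 // ler_nat.
  by rewrite -[X in (X <= _)%N]expn1 leq_exp2l.
move: IH; rewrite double cos_mulr2n ipow2S; nra.
Qed.

Lemma stepE m : step m = pi / (2 ^ m.+2)%:R.
Proof.
have pow_neq0 : (2 ^ m.+2)%:R != 0 :> R by rewrite pnatr_eq0 expn_eq0.
by rewrite /step /sides expnS natrM; field.
Qed.

Lemma step_gt0 m : 0 < step m.
Proof. by rewrite stepE divr_gt0 ?pi_gt0 ?ltr0n ?expn_gt0. Qed.

Lemma step_lt_pihalf m : step m < pi / 2.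
Proof.
rewrite stepE ltr_pM2l ?pi_gt0 // ltf_pV2 ?posrE ?ltr0n ?expn_gt0 // ltr_nat.
by rewrite -[X in (X < _)%N]expn1 ltn_exp2l.
Qed.

Lemma sin_step_gt0 m : 0 < sin (step m).
Proof. by apply: sin_gt0_pihalf; rewrite step_gt0 step_lt_pihalf. Qed.

Lemma cos_step_ge0 m : 0 <= cos (step m).
Proof.
apply: cos_ge0_pihalf; rewrite (ltW (step_lt_pihalf m)) andbT.
by rewrite (le_trans _ (ltW (step_gt0 m))) // oppr_le0 divr_ge0 ?pi_ge0.
Qed.

Lemma defect_ge0 m : 0 <= defect m.
Proof. by rewrite subr_ge0 cos_le1. Qed.

Lemma defect_le m : defect m <= ipow2 m / 2.
Proof.
rewrite /defect stepE; apply: (le_trans (one_sub_cos_pi_div_pow2 m.+2)).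
by rewrite !ipow2S; have := ipow2_gt0 m; lra.
Qed.

Lemma radius_ge0 m : 0 <= radius m.
Proof. by rewrite divr_ge0 // subr_ge0 ipow2_le1. Qed.

Lemma radius_gt0 m : (0 < m)%N -> 0 < radius m.
Proof.
case: m => // m _; rewrite /radius ipow2S.
by have := ipow2_le1 m; have := ipow2_gt0 m; lra.
Qed.

Lemma radius_lt m : radius m < 1 / 4.
Proof. by rewrite /radius; have := ipow2_gt0 m; lra. Qed.

Lemma slope_ge0 m : 0 <= slope m.
Proof. by rewrite divr_ge0 // addr_ge0 ?defect_ge0 ?ltW ?ipow2_gt0. Qed.

Lemma lift_at m : lift m m%:R = level m.
Proof. by rewrite /lift subrr mulr0 addr0. Qed.

Lemma two_sub_ipow2_le d : 2 - 2 * ipow2 d <= d%:R.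
Proof.
elim: d => [|d IH]; first by rewrite /ipow2 expn0 invr1; lra.
by rewrite ipow2S -[d.+1%:R]natr1; have := ipow2_le1 d; lra.
Qed.

Lemma ipow2_linear_decay d : ipow2 d.+1 * (8 + 3 * d%:R) <= 4.
Proof.
have pow_bound : (8 + 3 * d <= 2 ^ d.+3)%N.
  by elim: d => // d IH; rewrite expnS; lia.
have pow_gt0 : 0 < (2 ^ d.+1)%:R :> R by rewrite ltr0n expn_gt0.
rewrite /ipow2 mulrC ler_pdivrMr //.
have -> : 4 * (2 ^ d.+1)%:R = (2 ^ d.+3)%:R :> R by rewrite !expnS !natrM; ring.
by rewrite -(ler_nat R) natrD natrM in pow_bound.
Qed.

(* Key inequality: at the height of any other polygon P_i, the bound lift m
   exceeds 2 * radius i, which dominates every facet functional on P_i.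
   For i < m the slope is small enough, for i > m it is large enough. *)
Lemma two_radius_le_lift i m : i <> m -> 2 * radius i <= lift m i%:R.
Proof.
move=> neq_im.
have gapE : lift m i%:R - 2 * radius i = ((ipow2 m + defect m) * (i%:R - m%:R)
    - 2 * ipow2 m + 2 * ipow2 i - defect m * (1 - ipow2 m)) / 4.
  by rewrite /lift /level /slope /radius /defect; ring.
rewrite -subr_ge0 gapE divr_ge0 //.
case: (ltngtP i m) => [lt_im|lt_mi|//].
- (* m = i + d + 1: using defect m <= 2^-m / 2, the gap is at least
     2^-i (2 - 2^-(d+1) (8 + 3 d) / 2), which ipow2_linear_decay makes >= 0. *)
  have [d ->] : exists d, m = (i + d.+1)%N by exists (m - i).-1; lia.
  have -> : i%:R - (i + d.+1)%:R = - (d%:R + 1) :> R by rewrite natrD natr1; ring.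
  move: (defect_ge0 (i + d.+1)) (defect_le (i + d.+1)) (ipow2_linear_decay d).
  move: (ipow2_gt0 i) (ipow2_gt0 d.+1); rewrite ipow2D.
  move: (defect _) (ipow2 i) (ipow2 d.+1) => E hi hd hi_gt0 hd_gt0 E_ge0 E_le decay.
  have d_ge0 : 0 <= d%:R :> R by [].
  nra.
- (* i = m + d + 1: the gap is 2^-m (d + 1 - 2 + 2 * 2^-(d+1)) plus a
     nonnegative multiple of the defect. *)
  have [d ->] : exists d, i = (m + d.+1)%N by exists (i - m).-1; lia.
  have -> : (m + d.+1)%:R - m%:R = d.+1%:R :> R by rewrite natrD; ring.
  move: (defect_ge0 m) (two_sub_ipow2_le d.+1) (ipow2_gt0 m) (ipow2_le1 m).
  rewrite ipow2D; move: (defect _) (ipow2 m) (ipow2 d.+1) => E hm hd.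
  move=> E_ge0 grow hm_gt0 hm_le1.
  have d_ge1 : 1 <= d.+1%:R :> R by rewrite ler1n.
  nra.
Qed.

Definition cis (t : R) : 'rV[R]_2 := pt2 (cos t) (sin t).
Definition dot (u v : 'rV[R]_2) : R := u 0 0 * v 0 0 + u 0 1 * v 0 1.
Definition cross (u v : 'rV[R]_2) : R := u 0 0 * v 0 1 - u 0 1 * v 0 0.

Lemma pt2E0 (a b : R) : pt2 a b 0 0 = a.
Proof. by rewrite mxE. Qed.

Lemma pt2E1 (a b : R) : pt2 a b 0 1 = b.
Proof. by rewrite mxE. Qed.

Lemma pt2_coord (u : 'rV[R]_2) : pt2 (u 0 0) (u 0 1) = u.
Proof.
by apply/rowP => -[[|[|//]] lt_j2]; rewrite mxE /=; congr (u _ _); apply/val_inj.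
Qed.

Lemma dotDl (u v w : 'rV[R]_2) : dot (u + v) w = dot u w + dot v w.
Proof. by rewrite /dot !mxE; ring. Qed.

Lemma dotZr (u v : 'rV[R]_2) (c : R) : dot u (c *: v) = c * dot u v.
Proof. by rewrite /dot !mxE; ring. Qed.

Lemma dotDr (u v w : 'rV[R]_2) : dot u (v + w) = dot u v + dot u w.
Proof. by rewrite /dot !mxE; ring. Qed.

Lemma crossNl (u v : 'rV[R]_2) : cross (- u) v = - cross u v.
Proof. by rewrite /cross !mxE; ring. Qed.

Lemma dot_sumr (u : 'rV[R]_2) n (c : 'I_n -> R) (v : 'I_n -> 'rV[R]_2) :
  dot u (\sum_l c l *: v l) = \sum_l c l * dot u (v l).
Proof.
rewrite /dot !summxE !mulr_sumr -big_split /=.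
by apply: eq_bigr => l _; rewrite !mxE; ring.
Qed.

Lemma dot_cis (a b : R) : dot (cis a) (cis b) = cos (b - a).
Proof. by rewrite /dot !pt2E0 !pt2E1 cosB; ring. Qed.

Lemma cross_cis (a : R) (u : 'rV[R]_2) :
  cross (cis a) u = cos a * u 0 1 - sin a * u 0 0.
Proof. by rewrite /cross pt2E0 pt2E1 mulrC [sin a * _]mulrC. Qed.

Lemma cis_addpi (t : R) : cis (t + pi) = - cis t.
Proof. by rewrite /cis cosDpi sinDpi; apply/rowP => j; rewrite !mxE; case: ifP. Qed.

(* Cramer's rule: coordinates of u in the basis (cis a, cis b). *)
Lemma cis_decomp (a b : R) (u : 'rV[R]_2) : sin (b - a) != 0 ->
  u = (- cross (cis b) u / sin (b - a)) *: cis a + (cross (cis a) u / sin (b - a)) *: cis b.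
Proof.
move=> sin_neq0; apply/rowP => j; rewrite -[in LHS](pt2_coord u) !mxE !cross_cis.
move: sin_neq0; rewrite sinB => sin_neq0.
by case: ifP => _; field.
Qed.

Lemma cos_double_identity (x a : R) :
  1 + cos (a *+ 2) - cos (x *+ 2) - cos ((x - a) *+ 2) = 4 * cos a * sin x * sin (x - a).
Proof.
rewrite !cos_mulr2n cosB sinB; apply/eqP; rewrite -subr_eq0; apply/eqP.
transitivity (- (2 + 2 * cos a ^+ 2) * (cos x ^+ 2 + sin x ^+ 2 - 1)
   - 2 * sin x ^+ 2 * (cos a ^+ 2 + sin a ^+ 2 - 1)); first by ring.
by rewrite !cos2Dsin2 !subrr !mulr0 subrr.
Qed.

Lemma sin_mul_consecutive_ge0 (k j l : nat) : (j < k)%N -> (l < k)%N ->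
  0 <= sin ((l%:R - j%:R) * (pi / k%:R)) * sin ((l%:R - j%:R) * (pi / k%:R) - pi / k%:R) :> R.
Proof.
move=> lt_jk lt_lk; set a := pi / k%:R.
have k_gt0 : 0 < k%:R :> R by rewrite ltr0n; lia.
have sin_ge0 d : (d <= k)%N -> 0 <= sin (d%:R * a).
  move=> le_dk; apply: sin_ge0_pi; apply/andP; split.
    by rewrite mulr_ge0 // divr_ge0 ?pi_ge0 // ltW.
  rewrite /a mulrCA -[X in _ <= X]mulr1 ler_wpM2l ?pi_ge0 //.
  by rewrite ler_pdivrMr // mul1r ler_nat.
case: (leqP j l) => le_jl.
- rewrite -natrB //; case: (l - j)%N (leq_subr j l) => [|d] le_dk.
    by rewrite mul0r sin0 mul0r.
  have -> : d.+1%:R * a - a = d%:R * a by rewrite -natr1 mulrDl mul1r addrK.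
  by rewrite mulr_ge0 // sin_ge0 //; lia.
- have -> : l%:R - j%:R = - (j - l)%N%:R :> R by rewrite natrB ?opprB //; lia.
  case: (j - l)%N (leq_subr l j) => [|d] le_dk; first by rewrite oppr0 !mul0r sin0 mul0r.
  have -> : - d.+1%:R * a - a = - (d.+2%:R * a) by rewrite -!natr1; ring.
  by rewrite mulNr !sinN mulrNN mulr_ge0 // sin_ge0 //; lia.
Qed.

(* The sum of the cosines of two consecutive multiples of 2pi/k is maximal
   at the multiples 0 and -1: this says that every vertex of a regular k-gon
   lies on the inner side of each of its edges. *)
Lemma cos_adjacent_le (k j l : nat) (b : R) :
  (2 <= k)%N -> (j < k)%N -> (l < k)%N -> b = 2 * pi / k%:R ->
  cos ((l%:R - j%:R) * b) + cos ((l%:R - j%:R) * b - b) <= 1 + cos b.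
Proof.
move=> le_2k lt_jk lt_lk bE.
have k_gt0 : 0 < k%:R :> R by rewrite ltr0n; lia.
pose a : R := pi / k%:R.
have b_double : b = a *+ 2 by rewrite bE /a -mulr_natr; field; rewrite lt0r_neq0.
have cos_a_ge0 : 0 <= cos a.
  apply: cos_ge0_pihalf; apply/andP; split.
    by rewrite (@le_trans _ _ 0) ?oppr_le0 ?divr_ge0 ?pi_ge0 // ltW.
  by rewrite ler_pM2l ?pi_gt0 // lef_pV2 ?posrE // ler_nat.
pose x := (l%:R - j%:R) * a.
have -> : (l%:R - j%:R) * b - b = (x - a) *+ 2 by rewrite b_double mulrnBl mulrnAr.
rewrite b_double mulrnAr -/x -subr_ge0 opprD addrA cos_double_identity.
rewrite -mulrA; apply: mulr_ge0; first exact: mulr_ge0.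
exact: sin_mul_consecutive_ge0.
Qed.

(* The polygon P_m: convex hull of the vertices radius m * cis (j * step m),
   and the facet functional of its j-th edge, between vertices j and j+1. *)
Definition angle m (j : nat) : R := j%:R * step m.
Definition dir m (j : nat) : 'rV[R]_2 := cis (angle m j).
Definition vertex m (j : nat) : 'rV[R]_2 := radius m *: dir m j.
Definition polygon m : set 'rV[R]_2 :=
  [set x | exists w : 'I_(sides m) -> R, (forall j, 0 <= w j) /\
     \sum_j w j = 1 /\ x = \sum_j w j *: vertex m j].
Definition facet m (j : nat) (u : 'rV[R]_2) : R := dot (dir m j + dir m j.+1) u.

Lemma angleS m j : angle m j.+1 = angle m j + step m.
Proof. by rewrite /angle -natr1 mulrDl mul1r. Qed.

Lemma angle_half m j : angle m (j + 2 ^ m.+2) = angle m j + pi.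
Proof.
have pow_neq0 : (2 ^ m.+2)%:R != 0 :> R by rewrite pnatr_eq0 expn_eq0.
by rewrite /angle stepE natrD mulrDl; congr (_ + _); field.
Qed.

Lemma dir_half m j : dir m (j + 2 ^ m.+2) = - dir m j.
Proof. by rewrite /dir angle_half cis_addpi. Qed.

Lemma dir_sides m : dir m (sides m) = dir m 0.
Proof.
rewrite /dir /angle /step mul0r mulrC divfK ?sides_neq0 // mulr_natl.
by rewrite /cis cos2pi sin2pi cos0 sin0.
Qed.

Lemma facet_vertex m j i l : facet m j (vertex i l) =
  radius i * (cos (angle i l - angle m j) + cos (angle i l - angle m j.+1)).
Proof. by rewrite /facet /vertex dotZr dotDl !dot_cis. Qed.

Lemma facet_vertex_same m j l : (j < sides m)%N -> (l < sides m)%N ->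
  facet m j (vertex m l) <= level m.
Proof.
move=> lt_j lt_l; rewrite facet_vertex /level mulrC ler_wpM2r ?radius_ge0 //.
rewrite angleS opprD addrA.
have -> : angle m l - angle m j = (l%:R - j%:R) * step m by rewrite /angle; ring.
exact: cos_adjacent_le (ltnW (sides_ge3 m)) lt_j lt_l _.
Qed.

Lemma facet_vertex_le m j i l : facet m j (vertex i l) <= 2 * radius i.
Proof.
rewrite facet_vertex mulrC ler_wpM2r ?radius_ge0 //.
by have := cos_le1 (angle i l - angle m j); have := cos_le1 (angle i l - angle m j.+1); lra.
Qed.

Lemma dot_polygon_le (v : 'rV[R]_2) i (c : R) (u : 'rV[R]_2) :
  (forall l : 'I_(sides i), dot v (vertex i l) <= c) -> polygon i u -> dot v u <= c.
Proof.
move=> vertex_le [w [w_ge0 [w_sum1 ->]]]; rewrite dot_sumr.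
apply: le_trans (_ : \sum_l w l * c <= _); last by rewrite -mulr_suml w_sum1 mul1r.
by apply: ler_sum => l _; rewrite ler_wpM2l.
Qed.

Lemma facet_polygon_le_lift i m j (u : 'rV[R]_2) : polygon i u -> (j < sides m)%N ->
  facet m j u <= lift m i%:R.
Proof.
move=> Pu lt_j; apply: dot_polygon_le Pu => l.
have [eq_im|/eqP neq_im] := eqVneq i m.
  by subst i; rewrite lift_at; exact: facet_vertex_same.
exact: le_trans (facet_vertex_le m j i l) (two_radius_le_lift neq_im).
Qed.

Lemma polygon_abscissa i (u : 'rV[R]_2) : polygon i u -> `|u 0 0| <= radius i.
Proof.
move=> Pu.
have dotE (s : R) (v : 'rV[R]_2) : dot (pt2 s 0) v = s * v 0 0.
  by rewrite /dot pt2E0 pt2E1 mul0r addr0.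
have bound (s : R) : `|s| <= 1 -> s * u 0 0 <= radius i.
  move=> s_le1; rewrite -dotE; apply: dot_polygon_le Pu => l.
  rewrite /vertex dotZr dotE /dir /cis pt2E0 ler_piMr ?radius_ge0 //.
  by rewrite (le_trans (ler_norm _)) // normrM mulr_ile1 ?normr_ge0 ?cos_max.
move: (bound 1) (bound (-1)); rewrite normrN normr1 ler_norml; lra.
Qed.

Lemma sign_change (f : nat -> R) a n : (0 < n)%N -> 0 <= f a -> f (a + n)%N <= 0 ->
  exists2 p, (a <= p < a + n)%N & 0 <= f p /\ f p.+1 <= 0.
Proof.
elim: n a => // n IH a _ fa_ge0 fend_le0.
have [fa1_le0|fa1_gt0] := leP (f a.+1) 0; first by exists a => //; lia.
case: n IH fend_le0 => [|n] IH fend_le0.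
  by move: fend_le0; rewrite addn1 leNgt fa1_gt0.
have fend_le0' : f (a.+1 + n.+1)%N <= 0 by rewrite addSnnS.
have [p p_range fp] := IH a.+1 (ltn0Sn n) (ltW fa1_gt0) fend_le0'.
by exists p => //; lia.
Qed.

(* Every vector lies in a sector between two consecutive directions of P_m;
   since the direction j + sides m / 2 is opposite to direction j, the cross
   products with the directions change sign on a half-turn. *)
Lemma sector m (u : 'rV[R]_2) :
  exists2 p, (p < sides m)%N & 0 <= cross (dir m p) u /\ cross (dir m p.+1) u <= 0.
Proof.
pose h := (2 ^ m.+2)%N; pose f j := cross (dir m j) u.
have h_gt0 : (0 < h)%N by rewrite expn_gt0.
have sidesE : sides m = (h + h)%N by rewrite /sides expnS mul2n addnn.
have f_half j : f (j + h)%N = - f j by rewrite /f dir_half crossNl.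
have [f0_ge0|f0_lt0] := leP 0 (f 0%N).
  have f_end : f (0 + h)%N <= 0 by rewrite f_half oppr_le0.
  have [p p_range fp] := sign_change h_gt0 f0_ge0 f_end.
  by exists p => //; rewrite sidesE; lia.
have f_start : 0 <= f h by rewrite -[h]add0n f_half oppr_ge0 ltW.
have f_end : f (h + h)%N <= 0 by rewrite -sidesE /f dir_sides ltW.
have [p p_range fp] := sign_change h_gt0 f_start f_end.
by exists p => //; rewrite sidesE; lia.
Qed.

(* A nonnegative combination of two vertex directions with total weight at
   most radius m lies in P_m: the missing weight is split equally between
   two opposite vertices, which average to the centre. *)
Lemma polygon_cone m (p q : 'I_(sides m)) (A B : R) : 0 < radius m ->
  0 <= A -> 0 <= B -> A + B <= radius m -> polygon m (A *: dir m p + B *: dir m q).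
Proof.
move=> r_gt0 A_ge0 B_ge0 AB_le; set r := radius m.
have h_lt : (2 ^ m.+2 < sides m)%N by rewrite ltn_exp2l.
pose o : 'I_(sides m) := Ordinal (sides_gt0 m).
pose o' : 'I_(sides m) := Ordinal h_lt.
pose Z := (1 - (A + B) / r) / 2.
have Z_ge0 : 0 <= Z by rewrite divr_ge0 // subr_ge0 ler_pdivrMr // mul1r.
pose pick (k : 'I_(sides m)) (c : R) j := if j == k then c else 0.
have sum_pick k c : \sum_j pick k c j = c.
  by rewrite (bigD1 k) //= /pick eqxx big1 ?addr0 // => j /negPf ->.
have sum_pickZ k c : \sum_j pick k c j *: vertex m j = c *: vertex m k.
  by rewrite (bigD1 k) //= /pick eqxx big1 ?addr0 // => j /negPf ->; rewrite scale0r.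
exists (fun j => pick p (A / r) j + pick q (B / r) j + pick o Z j + pick o' Z j).
split; first by move=> j; rewrite /pick !addr_ge0 //; case: ifP => // _; rewrite divr_ge0 // ltW.
split; first by rewrite !big_split /= !sum_pick /Z; field; exact: lt0r_neq0.
under eq_bigr do rewrite !scalerDl.
rewrite !big_split /= !sum_pickZ /vertex (_ : dir m o' = - dir m o); last first.
  by rewrite -dir_half.
by rewrite !scalerA scalerN addrK !divfK ?lt0r_neq0.
Qed.

Lemma polygon_center m : (0 < m)%N -> polygon m 0.
Proof.
move=> m_gt0; pose o : 'I_(sides m) := Ordinal (sides_gt0 m).
have := @polygon_cone m o o 0 0 (radius_gt0 m_gt0).
by rewrite !scale0r addr0 addr0 lexx radius_ge0; apply.
Qed.

Lemma dir_succ m p : (p < sides m)%N -> exists q : 'I_(sides m), dir m p.+1 = dir m q.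
Proof.
case: (ltnP p.+1 (sides m)) => [lt_p1 _|ge_p1 lt_p]; first by exists (Ordinal lt_p1).
exists (Ordinal (sides_gt0 m)).
have -> : p.+1 = sides m by apply/eqP; rewrite eqn_leq ge_p1 lt_p.
exact: dir_sides.
Qed.

(* Conversely, a point satisfying all edge inequalities of P_m lies in P_m:
   write it in its sector as A dir p + B dir (p+1); the p-th edge inequality
   reads (A + B)(1 + cos (step m)) <= level m, i.e. A + B <= radius m. *)
Lemma facet_le_polygon m (u : 'rV[R]_2) : (0 < m)%N ->
  (forall j, (j < sides m)%N -> facet m j u <= level m) -> polygon m u.
Proof.
move=> m_gt0 facet_le.
have [p lt_p [cross_p_ge0 cross_p1_le0]] := sector m u.
have sin_gt0 := sin_step_gt0 m.
pose A := - cross (dir m p.+1) u / sin (step m).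
pose B := cross (dir m p) u / sin (step m).
have uE : u = A *: dir m p + B *: dir m p.+1.
  have step_diff : angle m p.+1 - angle m p = step m by rewrite angleS addrAC subrr add0r.
  by rewrite {1}(@cis_decomp (angle m p) (angle m p.+1) u) step_diff ?lt0r_neq0.
have facetE : facet m p u = (A + B) * (1 + cos (step m)).
  rewrite {1}uE /facet dotDr !dotZr !dotDl /dir !dot_cis angleS !subrr cos0.
  have -> : angle m p - (angle m p + step m) = - step m by ring.
  have -> : angle m p + step m - angle m p = step m by ring.
  by rewrite cosN; ring.
have AB_le : A + B <= radius m.
  have := facet_le p lt_p; rewrite facetE /level mulrC ler_pM2l //.
  by have := cos_step_ge0 m; lra.
have A_ge0 : 0 <= A by rewrite /A divr_ge0 ?oppr_ge0 // ltW.
have B_ge0 : 0 <= B by rewrite /B divr_ge0 // ltW.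
have [q dir_q] := dir_succ lt_p.
rewrite uE dir_q; exact: (polygon_cone (Ordinal lt_p) q (radius_gt0 m_gt0)).
Qed.

Lemma polygon_regular m : (0 < m)%N -> regular_polygon (sides m) (polygon m).
Proof.
move=> m_gt0; split; first exact: sides_ge3.
exists 0, (radius m), 0; split; first exact: radius_gt0.
have vertexE (j : 'I_(sides m)) : vertex m j =
    0 + radius m *: pt2 (cos (0 + 2 * pi * j%:R / (sides m)%:R))
                        (sin (0 + 2 * pi * j%:R / (sides m)%:R)).
  by rewrite !add0r /vertex /dir /cis /angle /step mulrA [j%:R * _]mulrC.
apply/seteqP; split=> x [w [w_ge0 [w_sum1 ->]]]; exists w; do 2!split => //;
  by apply: eq_bigr => j _; rewrite vertexE.
Qed.

Lemma convex_setI k (A B : set 'rV[R]_k) :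
  Defs.convex_set A -> Defs.convex_set B -> Defs.convex_set (A `&` B).
Proof. by move=> cA cB x y t [Ax Bx] [Ay By] t_ge0 t_le1; split; [exact: cA | exact: cB]. Qed.

Lemma convex_bigcap k (I : Type) (D : set I) (F : I -> set 'rV[R]_k) :
  (forall i, D i -> Defs.convex_set (F i)) -> Defs.convex_set (\bigcap_(i in D) F i).
Proof. by move=> cF x y t Fx Fy t_ge0 t_le1 i Di; apply: cF => //; [exact: Fx | exact: Fy]. Qed.

(* Points (x, y, z) of R^(2+0+1): plane coordinates x, no continuous
   auxiliary variable y, and the integer height z. *)
Local Notation V := 'rV[R]_(2 + 0 + 1).

Definition ix0 : 'I_(2 + 0 + 1) := lshift 1 (lshift 0 (0 : 'I_2)).
Definition ix1 : 'I_(2 + 0 + 1) := lshift 1 (lshift 0 (1 : 'I_2)).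
Definition iz : 'I_(2 + 0 + 1) := rshift (2 + 0) (0 : 'I_1).

Definition halfspace (a0 a1 a2 b : R) : set V :=
  [set w | a0 * w 0 ix0 + a1 * w 0 ix1 + a2 * w 0 iz <= b].

Lemma halfspace_closed a0 a1 a2 b : closed (halfspace a0 a1 a2 b).
Proof.
have scaled_coord (i : 'I_(2 + 0 + 1)) (a : R) : continuous (fun w : V => a * w 0 i).
  move=> w; apply: (@continuousM _ _ (fun=> a) (fun w : V => w 0 i)).
    exact: cst_continuous.
  exact: coord_continuous.
have sum_cont (f g : V -> R) : continuous f -> continuous g -> continuous (f \+ g).
  by move=> cf cg w; exact: (continuousD (cf w) (cg w)).
apply: (@preimage_closed _ _ _ [set s | s <= b]); last exact: closed_le.
have cont : continuous (fun w : V => a0 * w 0 ix0 + a1 * w 0 ix1 + a2 * w 0 iz).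
  apply: (sum_cont (fun w : V => a0 * w 0 ix0 + a1 * w 0 ix1)); last exact: scaled_coord.
  by apply: (sum_cont (fun w : V => a0 * w 0 ix0)); exact: scaled_coord.
by move=> w _; exact: cont.
Qed.

Lemma halfspace_convex a0 a1 a2 b : Defs.convex_set (halfspace a0 a1 a2 b).
Proof.
move=> w w' t hw hw' t_ge0 t_le1; rewrite /halfspace /= !mxE.
have -> : a0 * (t * w 0 ix0 + (1 - t) * w' 0 ix0) + a1 * (t * w 0 ix1 + (1 - t) * w' 0 ix1)
    + a2 * (t * w 0 iz + (1 - t) * w' 0 iz)
  = t * (a0 * w 0 ix0 + a1 * w 0 ix1 + a2 * w 0 iz)
    + (1 - t) * (a0 * w' 0 ix0 + a1 * w' 0 ix1 + a2 * w' 0 iz) by ring.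
have t'_ge0 : 0 <= 1 - t by rewrite subr_ge0.
by have := ler_wpM2l t_ge0 hw; have := ler_wpM2l t'_ge0 hw'; lra.
Qed.

(* The lifted set M, cut out by z >= 1 and one half-space for each edge j of
   each polygon P_m; slice w = x - z e1 is the point of the polygon plane
   that corresponds to w = (x, z). *)
Definition slice (w : V) : 'rV[R]_2 := pt2 (w 0 ix0 - w 0 iz) (w 0 ix1).

Definition facet_cut m j : set V :=
  let n := dir m j + dir m j.+1 in
  halfspace (n 0 0) (n 0 1) (- n 0 0 - slope m) (level m - slope m * m%:R).

Definition lifted : set V :=
  halfspace 0 0 (-1) (-1) `&`
  \bigcap_(mj in [set mj : nat * nat | (mj.2 < sides mj.1)%N]) facet_cut mj.1 mj.2.

Lemma facet_cutP m j (w : V) : facet_cut m j w <-> facet m j (slice w) <= lift m (w 0 iz).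
Proof.
rewrite /facet_cut /halfspace /facet /dot /slice /lift /= !pt2E0 !pt2E1.
by split; lra.
Qed.

Lemma liftedP (w : V) : lifted w <->
  1 <= w 0 iz /\ forall m j, (j < sides m)%N -> facet m j (slice w) <= lift m (w 0 iz).
Proof.
have heightE : halfspace 0 0 (-1) (-1) w <-> 1 <= w 0 iz.
  by rewrite /halfspace /= !mul0r !add0r mulN1r lerN2.
split=> [[/heightE z_ge1 cuts]|[z_ge1 facets_le]].
  by split=> // m j lt_j; apply/facet_cutP; exact: (cuts (m, j)).
by split=> [|[m j] lt_j]; [exact/heightE | exact/facet_cutP/facets_le].
Qed.

Lemma lifted_closed : closed lifted.
Proof.
apply: closedI; first exact: halfspace_closed.
by apply: closed_bigI => mj _; exact: halfspace_closed.
Qed.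

Lemma lifted_convex : Defs.convex_set lifted.
Proof.
apply: convex_setI; first exact: halfspace_convex.
by apply: convex_bigcap => mj _; exact: halfspace_convex.
Qed.

Lemma height_row (x : 'rV[R]_2) (y : 'rV[R]_0) (z : 'rV[R]_1) :
  (row_mx (row_mx x y) z) 0 iz = z 0 0.
Proof. by rewrite row_mxEr. Qed.

Lemma slice_row (x : 'rV[R]_2) (y : 'rV[R]_0) (z : 'rV[R]_1) :
  slice (row_mx (row_mx x y) z) = x - z 0 0 *: e1 R.
Proof.
rewrite /slice height_row /ix0 /ix1 !row_mxEl -[in RHS](pt2_coord x).
by apply/rowP => j; rewrite !mxE; case: ifP => _; rewrite ?mulr1 ?mulr0 ?subr0.
Qed.

(* M is a mixed-integer convex representation of the union of the
   translates: an integral height z = n >= 1 forces x - n e1 into P_n. *)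
Lemma lifted_represents :
  MICP_rep_by (bigcup [set i : nat | (0 < i)%N] (fun i => translate_e1 i (polygon i))) lifted.
Proof.
split; first exact: lifted_closed.
split; first exact: lifted_convex.
move=> x; split.
  move=> [i i_gt0 [v Pv <-]].
  exists 0, (const_mx i%:R); split; first by move=> k; rewrite mxE natr_int.
  apply/liftedP; rewrite height_row slice_row mxE addrK; split; first by rewrite ler1n.
  by move=> m j lt_j; exact: facet_polygon_le_lift.
move=> [y [z [z_int /liftedP[]]]]; rewrite height_row slice_row => z_ge1 facets_le.
have /natrP[n zE] : z 0 0 \is a Num.nat by rewrite -intrEge0 ?z_int // (le_trans _ z_ge1).
rewrite zE ler1n in z_ge1 facets_le.
exists n => //; exists (x - n%:R *: e1 R); last by rewrite subrK.
by apply: facet_le_polygon => // j lt_j; rewrite -lift_at; exact: facets_le.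
Qed.

(* The projection of M on the integer variable is the half-line z >= 1;
   every height is attained above the centre of the translates. *)
Lemma proj_lifted : proj_z lifted = [set z : 'rV[R]_1 | 1 <= z 0 0].
Proof.
apply/seteqP; split=> [z [x [y /liftedP[]]]|z /= z_ge1]; first by rewrite height_row.
exists (z 0 0 *: e1 R), 0; apply/liftedP; rewrite height_row slice_row subrr.
split=> // m j lt_j; apply: le_trans (_ : lift m 1%:R <= _).
  exact: facet_polygon_le_lift (polygon_center (ltn0Sn 0)) lt_j.
by rewrite /lift lerD2l ler_wpM2l ?slope_ge0 // lerB.
Qed.

Lemma rational_common_denominator n (v : 'rV[R]_n) : (forall j, Defs.rational (v 0 j)) ->
  exists2 N : int, 0 < N & forall j, N%:~R * v 0 j \is a Num.int.
Proof.
move=> v_rat; have /all_sig[q qE] := fun j => cid (v_rat j).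
exists (\prod_j denq (q j)); first by rewrite prodr_gt0 // => j _; exact: denq_gt0.
move=> j; rewrite qE (bigD1 j) //= -ratr_int -rmorphM /=.
set P := \prod_(i < n | i != j) denq (q i).
have -> : (denq (q j) * P)%:~R * q j = (numq (q j) * P)%:~R by rewrite !intrM numqE; ring.
by rewrite ratr_int intr_int.
Qed.

(* Half-lines of R are rationally unbounded: a rational affine image is a
   point or a half-line along A, and a multiple of A by a common
   denominator is an integral recession direction. *)
Lemma halfline_rationally_unbounded (a : R) :
  rationally_unbounded [set z : 'rV[R]_1 | a <= z 0 0].
Proof.
move=> d' A b A_rat _ /=.
have [->|A_neq0] := eqVneq A 0.
  left; exists (\sum_j `|b 0 j|) => _ [z _ <-] i.
  rewrite mulmx0 add0r (bigD1 i) //= lerDl sumr_ge0 // => k _.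
have [N N_gt0 NA_int] := rational_common_denominator (fun j => A_rat 0 j).
right; exists (N%:~R *: A); split; [|split].
- move=> _ lam [z z_ge_a <-] lam_ge0.
  exists (z + (lam * N%:~R)%:M); last by rewrite mulmxDl mul_scalar_mx scalerA addrAC.
  by rewrite /= !mxE eqxx mulr1n ler_wpDr // mulr_ge0 // ler0z ltW.
- by rewrite scaler_eq0 negb_or A_neq0 intr_eq0 lt0r_neq0.
- by move=> j; rewrite mxE.
Qed.

Lemma translates_disjoint (P Q : set 'rV[R]_2) i j : i <> j ->
  (forall u, P u -> `|u 0 0| < 1 / 2) -> (forall u, Q u -> `|u 0 0| < 1 / 2) ->
  translate_e1 i P `&` translate_e1 j Q = set0.
Proof.
move=> neq_ij P_narrow Q_narrow; rewrite -subset0 => x [[u Pu uE] [v Qv vE]].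
have shift : u 0 0 + i%:R = v 0 0 + j%:R.
  by move: (congr1 (fun w : 'rV[R]_2 => w 0 0) (etrans uE (esym vE))); rewrite !mxE eqxx !mulr1.
move: (P_narrow u Pu) (Q_narrow v Qv); rewrite !ltr_norml => /andP[u_lo u_hi] /andP[v_lo v_hi].
case: (ltngtP i j) => [lt_ij|lt_ji|//].
  have : i%:R + 1 <= j%:R :> R by rewrite natr1 ler_nat.
  lra.
have : j%:R + 1 <= i%:R :> R by rewrite natr1 ler_nat.
lra.
Qed.

End Construction.

Theorem corollary1 (R : realType) :
  exists (g : nat -> nat) (P : nat -> set 'rV[R]_2),
    (forall i, (0 < i)%N -> (0 < g i)%N) /\
    (forall i j, (0 < i)%N -> (i < j)%N -> (g i < g j)%N) /\
    (forall i, (0 < i)%N -> regular_polygon (g i) (P i)) /\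
    rational_MICP_representable
      (bigcup [set i : nat | (0 < i)%N] (fun i => translate_e1 i (P i))) /\
    (forall i j, (0 < i)%N -> (0 < j)%N -> i <> j ->
       translate_e1 i (P i) `&` translate_e1 j (P j) = set0).
Proof.
exists sides, (@polygon R).
split; first by move=> i _; exact: sides_gt0.
split; first by move=> i j _ lt_ij; rewrite ltn_exp2l.
split; first by move=> i; exact: polygon_regular.
split.
  exists 0%N, 1%N, (@lifted R); split; first exact: lifted_represents.
  by rewrite proj_lifted; exact: halfline_rationally_unbounded.
have narrow i (u : 'rV[R]_2) : polygon i u -> `|u 0 0| < 1 / 2.
  by move/polygon_abscissa/le_lt_trans; apply; have := radius_lt R i; lra.
by move=> i j _ _ neq_ij; exact: translates_disjoint neq_ij (@narrow i) (@narrow j).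
Qed.
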